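(* Let $q\ge2$ and let $U$ be a $q\times q$ row-stochastic matrix with strictly positive entries. There is a constant $C_4$ independent of $n$ such that for all sufficiently large $n$: (i) if $\mathbf{t}_1,\mathbf{t}_2\in\mathcal{N}_{q,n}$ satisfy $\mathbf{t}_1=\mathbf{t}_2+\mathbf{e}_b-\mathbf{e}_a$ for some $a\ne b\in[1:q]$, then $d_{\mathrm{TV}}(W_{\mathbf{t}_1},W_{\mathbf{t}_2})\le\frac{C_4(\log n)^{(q-2)/2}}{\sqrt n}$; (ii) for any $\mathbf{t}_1,\mathbf{t}_2\in\mathcal{N}_{q,n}$, $d_{\mathrm{TV}}(W_{\mathbf{t}_1},W_{\mathbf{t}_2})\le\frac{C_4(\log n)^{(q-2)/2}}{\sqrt n}\,d_{\mathrm c}(\mathbf{t}_1,\mathbf{t}_2)$.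
   Context: $\mathcal{N}_{q,n}=\{\mathbf{t}\in\mathbb{Z}_{\ge0}^q:\sum t_i=n\}$ is the set of compositions of vectors in $[1:q]^n$ (composition of $\mathbf{x}$: $(N(1|\mathbf{x}),\dots,N(q|\mathbf{x}))$, $N(c|\mathbf{x})=|\{i:x_i=c\}|$). For $\mathbf{t}\in\mathcal{N}_{q,n}$, $W_{\mathbf{t}}$ is the distribution of the composition of the output of $n$ independent uses of the DMC $U$ when the input is any vector of composition $\mathbf{t}$ (the output distribution of the $q$-ary noisy composition channel for input point mass at $\mathbf{t}$). $\mathbf{e}_c$ is the $c$-th unit vector. $d_{\mathrm c}(\mathbf{t},\mathbf{t}')=\frac12\sum_i|t_i-t_i'|$; $d_{\mathrm{TV}}(P,Q)=\frac12\sum|P-Q|$. Logarithms base 2. *)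

From HB Require Import structures.
From mathcomp Require Import all_boot all_order all_algebra.
From mathcomp Require Import all_classical all_reals all_analysis.
Set Implicit Arguments. Unset Strict Implicit. Unset Printing Implicit Defensive.
Import Order.TTheory GRing.Theory Num.Theory.
Local Open Scope ring_scope.

(* Symbols [1:q] are 'I_q; vectors in [1:q]^n are {ffun 'I_n -> 'I_q}. *)

Definition comp (q n : nat) (x : {ffun 'I_n -> 'I_q}) : {ffun 'I_q -> nat} :=
  [ffun c => #|[set i | x i == c]|].

Definition inN (q n : nat) (t : {ffun 'I_q -> nat}) : bool :=
  (\sum_(c < q) t c)%N == n.

Definition comps (q n : nat) : seq {ffun 'I_q -> nat} :=
  undup [seq comp x | x <- enum {ffun 'I_n -> 'I_q}].

Definition evec (q : nat) (c : 'I_q) : {ffun 'I_q -> nat} :=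
  [ffun i => nat_of_bool (i == c)].
Definition addcomp (q : nat) (s t : {ffun 'I_q -> nat}) : {ffun 'I_q -> nat} :=
  [ffun i => (s i + t i)%N].

Definition pos_stochastic (R : realType) (q : nat) (U : 'M[R]_q) : Prop :=
  (forall a b, 0 < U a b) /\ (forall a, \sum_(b < q) U a b = 1).

(* Output-composition distribution for a given input vector x:
   P(comp(Y) = s) where Y_i ~ U(x_i, .) independently. *)
Definition Wx (R : realType) (q n : nat) (U : 'M[R]_q)
  (x : {ffun 'I_n -> 'I_q}) (s : {ffun 'I_q -> nat}) : R :=
  \sum_(y : {ffun 'I_n -> 'I_q} | comp y == s) \prod_(i < n) U (x i) (y i).

(* W_t: use some (chosen) input vector of composition t; the distribution does
   not depend on the choice.  If t is not a composition, the zero function. *)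
Definition W (R : realType) (q n : nat) (U : 'M[R]_q)
  (t : {ffun 'I_q -> nat}) (s : {ffun 'I_q -> nat}) : R :=
  match [pick x : {ffun 'I_n -> 'I_q} | comp x == t] with
  | Some x => Wx U x s
  | None => 0
  end.

Definition dTV (R : realType) (q n : nat) (U : 'M[R]_q)
  (t1 t2 : {ffun 'I_q -> nat}) : R :=
  2^-1 * \sum_(s <- comps q n) `|W n U t1 s - W n U t2 s|.

Definition dc (R : realType) (q : nat) (t1 t2 : {ffun 'I_q -> nat}) : R :=
  2^-1 * \sum_(i < q) `|(t1 i)%:R - (t2 i)%:R : R|.

Definition log2 (R : realType) (x : R) : R := ln x / ln 2.

Definition bnd (R : realType) (q n : nat) (C : R) : R :=
  C * (log2 (n%:R : R)) `^ (((q%:R : R) - 2) / 2) / Num.sqrt (n%:R).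

From Pilot Require Import Defs.
From HB Require Import structures.
From mathcomp Require Import all_boot all_order all_algebra.
From mathcomp Require Import all_classical all_reals all_analysis.
From mathcomp Require Import fingroup perm.
From mathcomp Require Import ring lra zify.
Import Order.TTheory GRing.Theory Num.Theory.
Local Open Scope ring_scope.
Set Implicit Arguments. Unset Strict Implicit. Unset Printing Implicit Defensive.

(* Let mu > 0 bound every entry of U from below.  For any two symbols c <> d, each row of
   U is mu (delta_c + delta_d) plus a nonnegative remainder of mass 1 - 2 mu.  Inputs of
   adjacent compositions can be taken to differ in one position only, holding a and b; the
   difference of their output-composition laws is then (delta_b - delta_a) * L, with L the
   law of the other n - 1 outputs, and delta_b - delta_a = sum_e (U b e - U a e)
   (delta_e - delta_a).  Splitting every row of L as above bounds the total variation of
   (delta_e - delta_a) * L by the Binomial(n - 1, 2 mu) average over j of the total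
   variation of (delta_e - delta_a) * ((delta_e + delta_a) / 2)^j, which telescopes to
   2 C(j, floor(j/2)) / 2^j <= 2 / sqrt(j + 1).  This gives O(1 / sqrt(mu n)) for adjacent
   compositions, with no logarithmic factor (that factor is >= 1 once n >= 2); part (ii)
   follows by the triangle inequality along d_c(t1, t2) single-symbol moves. *)

Lemma eq_big_support (T : eqType) (V : nmodType) (s1 s2 : seq T) (F : T -> V) :
  uniq s1 -> uniq s2 ->
  (forall k, F k != 0 -> k \in s1) -> (forall k, F k != 0 -> k \in s2) ->
  \sum_(k <- s1) F k = \sum_(k <- s2) F k.
Proof.
move=> u1 u2 h1 h2.
have nz s : \sum_(k <- s) F k = \sum_(k <- s | F k != 0) F k.
  by rewrite [RHS]big_mkcond; apply: eq_bigr => k _; case: ifPn => // /negPn/eqP.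
rewrite nz (nz s2) -[LHS]big_filter -[RHS]big_filter.
apply/perm_big/uniq_perm; rewrite ?filter_uniq //.
by move=> k; rewrite !mem_filter; case nzk: (F k != 0); rewrite //= h1 ?h2.
Qed.

Section FiniteSignedMeasure.
Variables (R : numDomainType) (q : nat).
Local Notation K := {ffun 'I_q -> nat}.

(* Finitely supported signed measures on compositions, as lists of weighted atoms;
   lists are compared through [eqm], i.e. by their mass functions [massm]. *)
Definition fmeas := seq (R * K).
Implicit Types (M N P : fmeas) (k x : K) (G : K -> R).

Definition massm M k : R := \sum_(p <- M) (p.2 == k)%:R * p.1.
Definition integm M G : R := \sum_(p <- M) p.1 * G p.2.
Definition tvm M : R := \sum_(k <- undup (map snd M)) `|massm M k|.
Definition wnormm M : R := \sum_(p <- M) `|p.1|.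
Definition convm M N : fmeas := [seq (p.1 * r.1, addcomp p.2 r.2) | p <- M, r <- N].
Definition scalem a M : fmeas := [seq (a * p.1, p.2) | p <- M].
Definition shiftm x M : fmeas := [seq (p.1, addcomp x p.2) | p <- M].
Definition eqm M N := forall k, massm M k = massm N k.

Lemma massm_notin M k : k \notin map snd M -> massm M k = 0.
Proof.
rewrite /massm; elim: M => [|p M IH]; first by rewrite big_nil.
rewrite /= in_cons negb_or big_cons => /andP[pk kM].
by rewrite IH // eq_sym (negbTE pk) mul0r add0r.
Qed.

Lemma tvm_sum M (s : seq K) : uniq s -> {subset map snd M <= s} ->
  tvm M = \sum_(k <- s) `|massm M k|.
Proof.
move=> us sub; apply: eq_big_support; rewrite ?undup_uniq // => k.
  by rewrite normr_eq0 mem_undup => nz; apply: contraR nz => /massm_notin ->.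
by rewrite normr_eq0 => nz; apply: sub; apply: contraR nz => /massm_notin ->.
Qed.

Lemma massm_integm M k : massm M k = integm M (fun x => (x == k)%:R).
Proof. by apply: eq_bigr => p _; rewrite mulrC. Qed.

Lemma integm_sum M (s : seq K) G : uniq s -> {subset map snd M <= s} ->
  integm M G = \sum_(k <- s) massm M k * G k.
Proof.
move=> us sub; under eq_bigr do rewrite /massm mulr_suml.
rewrite exchange_big; apply: eq_big_seq => p pM.
rewrite (bigD1_seq p.2) ?sub ?map_f //= eqxx mul1r big1 ?addr0 // => k kp.
by rewrite eq_sym (negbTE kp) !mul0r.
Qed.

Lemma massm_cat M N k : massm (M ++ N) k = massm M k + massm N k.
Proof. exact: big_cat. Qed.

Section TwoMeasures.
Variables M N : fmeas.
Let s := undup (map snd (M ++ N)).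
Let us : uniq s. Proof. exact: undup_uniq. Qed.
Let sM : {subset map snd M <= s}.
Proof. by move=> k; rewrite mem_undup map_cat mem_cat => ->. Qed.
Let sN : {subset map snd N <= s}.
Proof. by move=> k; rewrite mem_undup map_cat mem_cat orbC => ->. Qed.

Lemma tvm_cat : tvm (M ++ N) <= tvm M + tvm N.
Proof.
rewrite (tvm_sum us sM) (tvm_sum us sN) /tvm -/s -big_split /=.
by apply: ler_sum => k _; rewrite massm_cat ler_normD.
Qed.

Hypothesis eMN : eqm M N.

Lemma tvm_eqm : tvm M = tvm N.
Proof. by rewrite (tvm_sum us sM) (tvm_sum us sN); apply: eq_bigr => k _; rewrite eMN. Qed.

Lemma integm_eqm G : integm M G = integm N G.
Proof.
by rewrite (integm_sum _ us sM) (integm_sum _ us sN); apply: eq_bigr => k _; rewrite eMN.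
Qed.

End TwoMeasures.

Lemma eqm_refl M : eqm M M. Proof. by []. Qed.
Lemma eqm_sym M N : eqm M N -> eqm N M. Proof. by move=> h k; rewrite h. Qed.
Lemma eqm_trans M N P : eqm M N -> eqm N P -> eqm M P.
Proof. by move=> h1 h2 k; rewrite h1 h2. Qed.

Lemma massm_scale a M k : massm (scalem a M) k = a * massm M k.
Proof. by rewrite /massm big_map mulr_sumr; apply: eq_bigr => p _; rewrite mulrCA. Qed.

Lemma eqm_cat M M' N N' : eqm M M' -> eqm N N' -> eqm (M ++ N) (M' ++ N').
Proof. by move=> h1 h2 k; rewrite !massm_cat h1 h2. Qed.

Lemma eqm_scale a M M' : eqm M M' -> eqm (scalem a M) (scalem a M').
Proof. by move=> h k; rewrite !massm_scale h. Qed.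

Lemma tvm_scale a M : tvm (scalem a M) = `|a| * tvm M.
Proof.
have sub : {subset map snd (scalem a M) <= undup (map snd M)}.
  by move=> k; rewrite mem_undup /scalem -map_comp.
rewrite (tvm_sum (undup_uniq _) sub) /tvm mulr_sumr.
by apply: eq_bigr => k _; rewrite massm_scale normrM.
Qed.

Lemma integm_convm M N G :
  integm (convm M N) G = integm M (fun x => integm N (fun y => G (addcomp x y))).
Proof.
rewrite /integm /convm big_allpairs_dep; apply: eq_bigr => p _.
by rewrite mulr_sumr; apply: eq_bigr => r _; rewrite mulrA.
Qed.

Lemma eq_integm M G1 G2 : G1 =1 G2 -> integm M G1 = integm M G2.
Proof. by move=> eG; apply: eq_bigr => p _; rewrite eG. Qed.

Lemma integm_cat M N G : integm (M ++ N) G = integm M G + integm N G.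
Proof. exact: big_cat. Qed.

Lemma integm_scale a M G : integm (scalem a M) G = a * integm M G.
Proof. by rewrite /integm big_map mulr_sumr; apply: eq_bigr => p _; rewrite mulrA. Qed.

Lemma exchange_integm M N (G : K -> K -> R) :
  integm M (fun x => integm N (G x)) = integm N (fun y => integm M (G^~ y)).
Proof.
rewrite /integm; under eq_bigr do rewrite mulr_sumr.
rewrite exchange_big; apply: eq_bigr => r _; rewrite mulr_sumr.
by apply: eq_bigr => p _; rewrite mulrCA.
Qed.

Lemma addcompC : commutative (@addcomp q).
Proof. by move=> x y; apply/ffunP => i; rewrite !ffunE addnC. Qed.

Lemma addcompA : associative (@addcomp q).
Proof. by move=> x y z; apply/ffunP => i; rewrite !ffunE addnA. Qed.

Lemma addcompI x : injective (addcomp x).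
Proof.
move=> y z /ffunP e; apply/ffunP => i.
by have := e i; rewrite !ffunE => /addnI.
Qed.

Lemma eqm_convm M M' N N' : eqm M M' -> eqm N N' -> eqm (convm M N) (convm M' N').
Proof.
move=> e1 e2 k; rewrite !massm_integm !integm_convm (integm_eqm e1).
by apply: eq_integm => x; apply: integm_eqm.
Qed.

Lemma convmC M N : eqm (convm M N) (convm N M).
Proof.
move=> k; rewrite !massm_integm !integm_convm exchange_integm.
by apply: eq_integm => x; apply: eq_integm => y; rewrite addcompC.
Qed.

Lemma convmA M N P : eqm (convm (convm M N) P) (convm M (convm N P)).
Proof.
move=> k; rewrite !massm_integm !integm_convm.
apply: eq_integm => x; rewrite integm_convm; apply: eq_integm => y.
by apply: eq_integm => z; rewrite addcompA.
Qed.

Lemma convm_catl M1 M2 N : convm (M1 ++ M2) N = convm M1 N ++ convm M2 N.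
Proof. exact: allpairs_cat. Qed.

Lemma convm_catr M N1 N2 : eqm (convm M (N1 ++ N2)) (convm M N1 ++ convm M N2).
Proof.
move=> k; rewrite massm_cat !massm_integm !integm_convm -big_split /=.
by apply: eq_bigr => p _; rewrite integm_cat mulrDr.
Qed.

Lemma convm_scalel a M N : eqm (convm (scalem a M) N) (scalem a (convm M N)).
Proof.
by move=> k; rewrite massm_scale !massm_integm !integm_convm integm_scale.
Qed.

Lemma tvm_shiftm x M : tvm (shiftm x M) = tvm M.
Proof.
rewrite (@tvm_sum _ (map (addcomp x) (undup (map snd M)))); first last.
- by move=> _ /mapP[_ /mapP[r rM ->] ->]; apply/map_f; rewrite mem_undup map_f.
- by rewrite map_inj_uniq ?undup_uniq //; apply: addcompI.
rewrite big_map; apply: eq_bigr => k _; congr `|_|.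
rewrite /massm /shiftm big_map; apply: eq_bigr => p _ /=.
by rewrite (inj_eq (@addcompI x)).
Qed.

Lemma tvm_convm M N : tvm (convm M N) <= wnormm M * tvm N.
Proof.
set s := undup (map snd (convm M N)).
have massE k : massm (convm M N) k = \sum_(p <- M) p.1 * massm (shiftm p.2 N) k.
  rewrite massm_integm integm_convm; apply: eq_bigr => p _; congr (_ * _).
  by rewrite /integm /massm /shiftm big_map; apply: eq_bigr => r _; rewrite mulrC.
apply: le_trans (_ : \sum_(k <- s) \sum_(p <- M) `|p.1| * `|massm (shiftm p.2 N) k| <= _).
  apply: ler_sum => k _; rewrite massE; apply: le_trans (ler_norm_sum _ _ _) _.
  by apply: ler_sum => p _; rewrite normrM.
rewrite exchange_big /wnormm mulr_suml big_seq [leRHS]big_seq; apply: ler_sum => p pM.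
rewrite -mulr_sumr ler_wpM2l // -(tvm_shiftm p.2) (@tvm_sum _ s) ?undup_uniq //.
move=> k /mapP[r /mapP[r' r'N ->] ->]; rewrite mem_undup.
by apply/mapP; exists (p.1 * r'.1, addcomp p.2 r'.2) => //; apply/allpairsP; exists (p, r').
Qed.

Lemma massm_uniq M p : uniq (map snd M) -> p \in M -> massm M p.2 = p.1.
Proof.
elim: M => [|r M IH] //= /andP[rM u]; rewrite in_cons => /orP[/eqP->|pM].
  by rewrite /massm big_cons eqxx mul1r -/(massm M r.2) massm_notin ?addr0.
have rp : r.2 != p.2 by apply: contraNneq rM => ->; apply: map_f.
by rewrite /massm big_cons (negbTE rp) mul0r add0r; apply: IH.
Qed.

Lemma tvm_uniq M : uniq (map snd M) -> tvm M = \sum_(p <- M) `|p.1|.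
Proof.
move=> u; rewrite /tvm undup_id // big_map; apply: eq_big_seq => p pM.
by rewrite massm_uniq.
Qed.

Lemma massm_flatten (ss : seq fmeas) k : massm (flatten ss) k = \sum_(M <- ss) massm M k.
Proof.
elim: ss => [|M ss IH]; first by rewrite big_nil /massm big_nil.
by rewrite big_cons /= massm_cat IH.
Qed.

Lemma tvm_convm_flatten (I : Type) (s : seq I) (f : I -> R) (g : I -> fmeas) N :
  tvm (convm (flatten [seq scalem (f e) (g e) | e <- s]) N) <=
  \sum_(e <- s) `|f e| * tvm (convm (g e) N).
Proof.
elim: s => [|e s IH]; first by rewrite big_nil /tvm big_nil.
rewrite big_cons /= convm_catl; apply: le_trans (tvm_cat _ _) _; apply: lerD => //.
by rewrite (tvm_eqm (convm_scalel _ _ _)) tvm_scale.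
Qed.

End FiniteSignedMeasure.

Section OutputMeasure.
Variables (R : realType) (q : nat) (U : 'M[R]_q).
Local Notation K := {ffun 'I_q -> nat}.

Definition out_meas n (x : {ffun 'I_n -> 'I_q}) : fmeas R q :=
  [seq (\prod_i U (x i) (y i), Defs.comp y) | y : {ffun 'I_n -> 'I_q} <- enum {ffun 'I_n -> 'I_q}].

Definition row_meas (a : 'I_q) : fmeas R q := [seq (U a e, evec e) | e <- enum 'I_q].

Definition ffcons n (c : 'I_q) (y : {ffun 'I_n -> 'I_q}) : {ffun 'I_n.+1 -> 'I_q} :=
  [ffun i => if unlift ord0 i is Some j then y j else c].
Definition fftail n (y : {ffun 'I_n.+1 -> 'I_q}) : {ffun 'I_n -> 'I_q} :=
  [ffun j => y (lift ord0 j)].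

Lemma ffcons0 n c (y : {ffun 'I_n -> 'I_q}) : ffcons c y ord0 = c.
Proof. by rewrite ffunE unlift_none. Qed.

Lemma ffconsS n c (y : {ffun 'I_n -> 'I_q}) j : ffcons c y (lift ord0 j) = y j.
Proof. by rewrite ffunE liftK. Qed.

Lemma fftail_cons n c (y : {ffun 'I_n -> 'I_q}) : fftail (ffcons c y) = y.
Proof. by apply/ffunP => j; rewrite ffunE ffconsS. Qed.

Lemma ffcons_tail n (y : {ffun 'I_n.+1 -> 'I_q}) : ffcons (y ord0) (fftail y) = y.
Proof. by apply/ffunP => i; rewrite ffunE; case: unliftP => [j ->|->]; rewrite ?ffunE. Qed.

Lemma comp_ffcons n c (y : {ffun 'I_n -> 'I_q}) :
  Defs.comp (ffcons c y) = addcomp (evec c) (Defs.comp y).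
Proof.
apply/ffunP => e; rewrite !ffunE -!sum1dep_card [LHS]big_mkcond [in RHS]big_mkcond.
rewrite big_ord_recl ffcons0; congr (_ + _)%N; first by rewrite eq_sym; case: (e == c).
by apply: eq_bigr => j _; rewrite ffconsS.
Qed.

Lemma massm_out_meas n (x : {ffun 'I_n -> 'I_q}) : massm (out_meas x) =1 Wx U x.
Proof.
move=> s; rewrite /massm /out_meas big_map /Wx big_enum /= [RHS]big_mkcond /=.
by apply: eq_bigr => y _; case: eqP; rewrite ?mul1r ?mul0r.
Qed.

Lemma out_meas_cons n (x : {ffun 'I_n.+1 -> 'I_q}) :
  eqm (out_meas x) (convm (row_meas (x ord0)) (out_meas (fftail x))).
Proof.
move=> s; rewrite massm_out_meas massm_integm integm_convm /Wx big_mkcond /=.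
rewrite (reindex (fun p : 'I_q * {ffun 'I_n -> 'I_q} => ffcons p.1 p.2)) /=; last first.
  exists (fun y : {ffun 'I_n.+1 -> 'I_q} => (y ord0, fftail y)) => [[c y] _|y _] /=.
    by rewrite ffcons0 fftail_cons.
  exact: ffcons_tail.
rewrite -(pair_bigA _ (fun c y => if Defs.comp (ffcons c y) == s then
   \prod_(i < n.+1) U (x i) (ffcons c y i) else 0)) /=.
rewrite /integm /row_meas big_map big_enum /=; apply: eq_bigr => c _ /=.
rewrite /out_meas big_map big_enum /= mulr_sumr; apply: eq_bigr => y _ /=.
rewrite comp_ffcons big_ord_recl ffcons0; case: eqP => _; last by rewrite !mulr0.
by rewrite mulr1; congr (_ * _); apply: eq_bigr => i _; rewrite ffconsS ffunE.
Qed.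

Lemma comp_perm n (y : {ffun 'I_n -> 'I_q}) (s : 'S_n) :
  Defs.comp [ffun i => y (s i)] = Defs.comp y.
Proof.
apply/ffunP => e; rewrite !ffunE.
have -> : [set i | [ffun i => y (s i)] i == e] = s @^-1: [set i | y i == e].
  by apply/setP => i; rewrite !inE ffunE.
exact/card_preimset/perm_inj.
Qed.

Lemma out_meas_perm n (x : {ffun 'I_n -> 'I_q}) (s : 'S_n) :
  eqm (out_meas [ffun i => x (s i)]) (out_meas x).
Proof.
move=> k; rewrite !massm_out_meas /Wx.
have inj : injective (fun y : {ffun 'I_n -> 'I_q} => [ffun i => y (s i)]).
  move=> y1 y2 /ffunP e; apply/ffunP => i.
  by have := e ((s^-1)%g i); rewrite !ffunE permKV.
rewrite [LHS](reindex_inj inj) /=; apply: eq_big => [y|y _]; first by rewrite comp_perm.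
by rewrite [RHS](reindex_inj (@perm_inj _ s)); apply: eq_bigr => i _; rewrite !ffunE.
Qed.

(* Peel off a common first symbol, after moving an occurrence of it to the front of [x']. *)
Lemma out_meas_comp n (x x' : {ffun 'I_n -> 'I_q}) :
  Defs.comp x = Defs.comp x' -> eqm (out_meas x) (out_meas x').
Proof.
elim: n x x' => [|n IH] x x' e.
  by have -> : x = x' by apply/ffunP => -[].
have : (0 < Defs.comp x' (x ord0))%N.
  by rewrite -e ffunE card_gt0; apply/set0Pn; exists ord0; rewrite inE.
rewrite ffunE card_gt0 => /set0Pn[j]; rewrite inE => /eqP x'j.
set x'' := [ffun i => x' (tperm ord0 j i)].
apply: eqm_trans (out_meas_perm x' (tperm ord0 j)); rewrite -/x''.
have x''0 : x'' ord0 = x ord0 by rewrite ffunE tpermL.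
apply: eqm_trans (out_meas_cons x) _; apply: eqm_trans _ (eqm_sym (out_meas_cons x'')).
rewrite x''0; apply: eqm_convm => //; apply: IH; apply: (@addcompI _ (evec (x ord0))).
by rewrite -!comp_ffcons ffcons_tail -x''0 ffcons_tail /x'' comp_perm.
Qed.

Lemma comp_surj n (t : K) : inN n t -> exists x : {ffun 'I_n -> 'I_q}, Defs.comp x = t.
Proof.
elim: n t => [|n IH] t /eqP st.
  exists (ffun0 (card_ord 0)).
  apply/ffunP => e; rewrite ffunE -sum1dep_card big_pred0 => [|[]//].
  by apply/esym/eqP; rewrite -leqn0 -st (bigD1 e) //= leq_addr.
have [c tc] : exists c, (0 < t c)%N.
  apply/existsP; apply: contraT; rewrite negb_exists => /forallP t0.
  by move: st; rewrite big1 // => i _; apply/eqP; rewrite -leqn0 leqNgt t0.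
set t' : K := [ffun e => t e - (e == c)]%N.
have tE : t = addcomp (evec c) t'.
  apply/ffunP => e; rewrite !ffunE; case: eqP => [->|_]; last by rewrite subn0.
  by rewrite add1n subn1 prednK.
have t'n : inN n t'.
  have : (\sum_(e < q) t e = 1 + \sum_(e < q) t' e)%N.
    rewrite {1}tE; under eq_bigr do rewrite ffunE.
    rewrite big_split /= (bigD1 c) //= big1 => [|e /negbTE ec]; last by rewrite ffunE ec.
    by rewrite ffunE eqxx.
  by rewrite st add1n => -[->]; rewrite /inN.
have [x' x't'] := IH t' t'n.
by exists (ffcons c x'); rewrite comp_ffcons x't' -tE.
Qed.

Lemma W_comp n (t : K) : inN n t ->
  exists x : {ffun 'I_n -> 'I_q}, Defs.comp x = t /\ W n U t =1 Wx U x.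
Proof.
move=> tn; rewrite /W; case: pickP => [x /eqP xt | none]; first by exists x.
by have [x xt] := comp_surj tn; have := none x; rewrite xt eqxx.
Qed.

Lemma dTV_tvm n (t1 t2 : K) (x1 x2 : {ffun 'I_n -> 'I_q}) :
  W n U t1 =1 Wx U x1 -> W n U t2 =1 Wx U x2 ->
  dTV n U t1 t2 = 2^-1 * tvm (out_meas x1 ++ scalem (-1) (out_meas x2)).
Proof.
move=> W1 W2; rewrite /dTV (@tvm_sum _ _ _ (comps q n)) ?undup_uniq //; last first.
  move=> k; rewrite map_cat mem_cat /scalem -map_comp /comps mem_undup /out_meas -!map_comp.
  by case/orP.
congr (_ * _); apply: eq_bigr => s _.
by rewrite massm_cat massm_scale !massm_out_meas W1 W2 mulN1r.
Qed.

End OutputMeasure.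

Section CentralBinomial.
Local Open Scope nat_scope.

Lemma central_binom_succ_even m : 'C(m.*2.+1, m) * m.+1 = 'C(m.*2, m) * m.*2.+1.
Proof.
have := mul_bin_down m.*2.+1 m; rewrite /= mulnC => ->.
by rewrite mulnC; congr (_ * _); lia.
Qed.

Lemma central_binom_succ_odd m : 'C(m.+1.*2, m.+1) = 2 * 'C(m.*2.+1, m).
Proof.
apply/eqP; rewrite -(eqn_pmul2l (ltn0Sn m)) -mul_bin_diag doubleS /=.
by apply/eqP; lia.
Qed.

Lemma central_binom_even_sq m : 'C(m.*2, m) ^ 2 * m.*2.+1 <= 16 ^ m.
Proof.
elim: m => [|m IH]; first by rewrite bin0.
have hm : 0 < m.+1 * m.+1 by rewrite muln_gt0.
rewrite central_binom_succ_odd (expnS 16) -(leq_pmul2l hm) -!mulnn.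
rewrite -mulnn in IH; have e := central_binom_succ_even m.
set A := 'C(m.*2, m) in e IH *; set B := 'C(m.*2.+1, m) in e *.
have -> : m.+1 * m.+1 * (2 * B * (2 * B) * m.+1.*2.+1)
        = 4 * m.+1.*2.+1 * ((B * m.+1) * (B * m.+1)) by lia.
rewrite e.
have -> : 4 * m.+1.*2.+1 * (A * m.*2.+1 * (A * m.*2.+1))
        = 4 * m.*2.+3 * m.*2.+1 * (A * A * m.*2.+1) by lia.
have h : 4 * m.*2.+3 * m.*2.+1 <= 16 * (m.+1 * m.+1) by lia.
by apply: leq_trans (leq_mul h IH) _; lia.
Qed.

Lemma central_binom_sq j : 'C(j, j./2) ^ 2 * j.+1 <= 4 ^ j.
Proof.
rewrite -(odd_double_half j); set m := j./2.
have e16 : 4 ^ m.*2 = 16 ^ m by rewrite -mul2n expnM.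
case: (odd j) => /=.
  rewrite add1n uphalf_double (expnS 4) e16.
  have hm : 0 < m.+1 * m.+1 by rewrite muln_gt0.
  rewrite -(leq_pmul2l hm) -!mulnn.
  have e := central_binom_succ_even m; have IH := central_binom_even_sq m.
  rewrite -mulnn in IH; set A := 'C(m.*2, m) in e IH; set B := 'C(m.*2.+1, m) in e *.
  have -> : m.+1 * m.+1 * (B * B * m.*2.+2) = m.*2.+2 * ((B * m.+1) * (B * m.+1)) by lia.
  rewrite e.
  have -> : m.*2.+2 * (A * m.*2.+1 * (A * m.*2.+1))
          = m.*2.+2 * m.*2.+1 * (A * A * m.*2.+1) by lia.
  have h : m.*2.+2 * m.*2.+1 <= 4 * (m.+1 * m.+1) by lia.
  by apply: leq_trans (leq_mul h IH) _; lia.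
by rewrite add0n doubleK e16; apply: central_binom_even_sq.
Qed.

Lemma leq_bin_succ_lt_half j v : v < j./2 -> 'C(j, v) <= 'C(j, v.+1).
Proof.
move=> hv; rewrite -(leq_pmul2l (ltn0Sn v)) mul_bin_left leq_mul //.
by move: hv; rewrite -{1}(odd_double_half j); lia.
Qed.

Lemma geq_bin_succ_ge_half j v : j./2 <= v -> 'C(j, v.+1) <= 'C(j, v).
Proof.
move=> hv; rewrite -(leq_pmul2l (ltn0Sn v)) mul_bin_left leq_mul //.
by move: hv; rewrite -{1}(odd_double_half j); lia.
Qed.

End CentralBinomial.

Lemma sum_binomial_recursion (R : comNzRingType) m (a b : R) (f : nat -> R) :
  \sum_(j < m.+1) 'C(m, j)%:R * a ^+ j * b ^+ (m - j) * (a * f j.+1 + b * f j)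
  = \sum_(j < m.+2) 'C(m.+1, j)%:R * a ^+ j * b ^+ (m.+1 - j) * f j.
Proof.
have shift : \sum_(j < m.+1) 'C(m, j)%:R * a ^+ j * b ^+ (m - j).+1 * f j
    = b ^+ m.+1 * f 0%N
      + \sum_(j < m.+1) 'C(m, j.+1)%:R * a ^+ j.+1 * b ^+ (m - j) * f j.+1.
  rewrite big_ord_recl [in RHS]big_ord_recr /= bin0 subn0 bin_small // !mul0r.
  rewrite addr0 expr0 !mul1r; congr (_ + _); apply: eq_bigr => j _.
  by rewrite /bump /= add1n subnSK.
rewrite [RHS]big_ord_recl /= bin0 subn0 expr0 !mul1r.
under eq_bigr do rewrite mulrDr.
rewrite big_split /=.
have -> : \sum_(j < m.+1) 'C(m, j)%:R * a ^+ j * b ^+ (m - j) * (b * f j)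
    = \sum_(j < m.+1) 'C(m, j)%:R * a ^+ j * b ^+ (m - j).+1 * f j.
  by apply: eq_bigr => j _; rewrite exprS; ring.
rewrite shift addrCA -big_split /=; congr (_ + _); apply: eq_bigr => j _.
by rewrite /bump /= add1n binS subSS natrD exprS; ring.
Qed.

Section BinomialMixture.
Variable R : rcfType.

Lemma central_binom_ratio_sq j : ('C(j, j./2)%:R / 2 ^+ j) ^+ 2 <= (j.+1%:R : R)^-1.
Proof.
have h := central_binom_sq j; rewrite -(ler_nat R) natrM !natrX in h.
have e4 : (4%:R : R) ^+ j = (2 ^+ j) ^+ 2 by rewrite -exprM mulnC exprM expr2 -natrM.
by rewrite expr_div_n -e4 ler_pdivrMr ?exprn_gt0 // mulrC ler_pdivlMr.
Qed.

Lemma double_le_sqr_add_inv (b r : R) : 0 < r -> 2 * b <= r * b ^+ 2 + r^-1.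
Proof.
move=> r0; rewrite -subr_ge0 -(pmulr_rge0 _ r0).
have -> : r * (r * b ^+ 2 + r^-1 - 2 * b) = (r * b - 1) ^+ 2 by field; rewrite gt_eqF.
exact: sqr_ge0.
Qed.

Lemma sum_binomial_pmf m (p : R) :
  \sum_(j < m.+1) 'C(m, j)%:R * p ^+ j * (1 - p) ^+ (m - j) = 1.
Proof.
have := exprDn (1 - p) p m; rewrite subrK expr1n => e; rewrite [RHS]e.
by apply: eq_bigr => j _; rewrite -mulr_natl; ring.
Qed.

(* The identity C(m, j) / (j + 1) = C(m + 1, j + 1) / (m + 1) turns the sum into a
   binomial expansion of order m + 1 missing its j = 0 term. *)
Lemma sum_binomial_pmf_inv m (p : R) : 0 < p <= 1 ->
  \sum_(j < m.+1) 'C(m, j)%:R * p ^+ j * (1 - p) ^+ (m - j) * (j.+1%:R)^-1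
   <= ((m.+1)%:R * p)^-1.
Proof.
move=> /andP[p0 p1]; have mp : 0 < (m.+1)%:R * p by rewrite mulr_gt0.
have := sum_binomial_pmf m.+1 p; rewrite big_ord_recl => e.
rewrite -[leRHS]mul1r ler_pdivlMr // mulr_suml -[leRHS]e -[leLHS]add0r.
apply: lerD; first by rewrite !mulr_ge0 ?exprn_ge0 ?subr_ge0 // ltW.
rewrite le_eqVlt; apply/orP; left; apply/eqP/eq_bigr => j _.
have hb : (j.+1%:R * 'C(m.+1, j.+1)%:R = m.+1%:R * 'C(m, j)%:R :> R).
  by rewrite -!natrM -mul_bin_diag.
rewrite lift0 subSS exprS.
have -> : ('C(m.+1, j.+1)%:R : R) = m.+1%:R * 'C(m, j)%:R / j.+1%:R.
  by rewrite -hb [RHS]mulrC mulKf ?pnatr_eq0.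
by set A := p ^+ j; set B := (1 - p) ^+ (m - j); field; rewrite nat1r pnatr_eq0.
Qed.

Lemma binomial_mixture_central_binom m (mu : R) : 0 < mu -> 2 * mu <= 1 ->
  \sum_(j < m.+1) 'C(m, j)%:R * mu ^+ j * (1 - 2 * mu) ^+ (m - j) * (2 * 'C(j, j./2)%:R)
   <= 2 / Num.sqrt ((m.+1)%:R * (2 * mu)).
Proof.
move=> mu0 mu1; set p := 2 * mu; have p0 : 0 < p by rewrite /p; lra.
have mp : 0 < (m.+1)%:R * p by rewrite mulr_gt0.
set r := Num.sqrt ((m.+1)%:R * p); have r0 : 0 < r by rewrite sqrtr_gt0.
have rr : r * r = (m.+1)%:R * p by rewrite -expr2 sqr_sqrtr // ltW.
set w := fun j : 'I_m.+1 => 'C(m, j)%:R * p ^+ j * (1 - p) ^+ (m - j).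
have w0 j : 0 <= w j by rewrite !mulr_ge0 ?exprn_ge0 // ?subr_ge0 // ltW.
have -> : \sum_(j < m.+1) 'C(m, j)%:R * mu ^+ j * (1 - p) ^+ (m - j) * (2 * 'C(j, j./2)%:R)
    = \sum_(j < m.+1) w j * (2 * ('C(j, j./2)%:R / 2 ^+ j)).
  apply: eq_bigr => j _; have t0 : (2 ^+ j : R) != 0 by rewrite gt_eqF // exprn_gt0.
  rewrite /w /p exprMn; set T := 2 ^+ j; set B := (1 - _) ^+ _.
  by field; exact: t0.
apply: le_trans (_ : \sum_(j < m.+1) w j * (r * (j.+1%:R)^-1 + r^-1) <= _).
  apply: ler_sum => j _; apply: ler_wpM2l => //.
  apply: le_trans (double_le_sqr_add_inv _ r0) _; rewrite lerD2r ler_pM2l //.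
  exact: central_binom_ratio_sq.
under eq_bigr do rewrite mulrDr mulrCA.
rewrite big_split /= -mulr_sumr -mulr_suml sum_binomial_pmf mul1r.
apply: le_trans (_ : r * ((m.+1)%:R * p)^-1 + r^-1 <= _).
  rewrite lerD2r ler_pM2l //; apply: sum_binomial_pmf_inv; rewrite p0 /p; lra.
by rewrite -rr invfM mulrA divff ?gt_eqF // mul1r; lra.
Qed.

End BinomialMixture.

Lemma sum_delta (R : pzSemiRingType) (T : finType) (F : T -> R) x :
  \sum_(e : T) F e * (e == x)%:R = F x.
Proof. by rewrite (bigD1 x) //= eqxx mulr1 big1 ?addr0 // => e /negbTE ->; rewrite mulr0. Qed.

Definition pairm (R : numDomainType) q (c d : 'I_q) : fmeas R q :=
  [:: (1, evec c); (1, evec d)].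

Definition dipole (R : numDomainType) q (c d : 'I_q) : fmeas R q :=
  [:: (1, evec c); (-1, evec d)].

Section PairPowers.
Variables (R : numDomainType) (q : nat) (c d : 'I_q).
Local Notation fmeas := (fmeas R q).

Definition pairn j (P : fmeas) := iter j (fun M => convm M (pairm R c d)) P.

Lemma pairn_convm j P X : eqm (pairn j (convm P X)) (convm (pairn j P) X).
Proof.
elim: j => //= j IH; apply: eqm_trans (eqm_convm IH (eqm_refl _)) _.
apply: eqm_trans (convmA _ _ _) _; apply: eqm_trans _ (eqm_sym (convmA _ _ _)).
exact/eqm_convm/convmC.
Qed.

Lemma tvm_convm_dipole_same (a : 'I_q) N :
  tvm (convm (dipole R a a) N) = 0.
Proof.
have e : eqm (dipole R a a) [::].
  by move=> k; rewrite /massm /dipole !big_cons big_nil /=; ring.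
by rewrite (tvm_eqm (eqm_convm e (eqm_refl N))) /tvm big_nil.
Qed.

End PairPowers.

Section Smoothing.
Variables (R : realType) (q : nat) (U : 'M[R]_q) (c d : 'I_q) (mu : R).
Hypothesis cd : c != d.
Hypothesis mu_gt0 : 0 < mu.
Hypothesis mu_le : 2 * mu <= 1.
Hypothesis mu_leU : forall a e, mu <= U a e.
Hypothesis U_row1 : forall a, \sum_(e < q) U a e = 1.

Local Notation fmeas := (fmeas R q).

(* Each row of U puts mass at least mu on both c and d: split it as
   mu (delta_c + delta_d) plus a nonnegative remainder of mass 1 - 2 mu. *)
Definition residm a : fmeas :=
  [seq (U a e - mu * ((e == c)%:R + (e == d)%:R), evec e) | e <- enum 'I_q].

Lemma row_meas_split a : eqm (row_meas U a) (scalem mu (pairm R c d) ++ residm a).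
Proof.
move=> k; rewrite massm_cat massm_scale /massm /row_meas /residm !big_map !big_cons big_nil.
under [in RHS]eq_bigr do rewrite mulrBr !mulrDr.
rewrite sumrB big_split /=.
have delta x : \sum_(e < q) (evec e == k)%:R * (mu * (e == x)%:R) = mu * (evec x == k)%:R.
  by under eq_bigr do rewrite mulrCA; rewrite -mulr_sumr sum_delta.
by rewrite !delta; ring.
Qed.

Lemma residm_weight_ge0 a e : 0 <= U a e - mu * ((e == c)%:R + (e == d)%:R).
Proof.
have := mu_leU a e; case: eqP => [->|_]; case: eqP => [ed|_] /=.
- by move: cd; rewrite ed eqxx.
- by rewrite addr0 mulr1 subr_ge0.
- by rewrite add0r mulr1 subr_ge0.
- by rewrite addr0 mulr0 subr0 => /(le_trans (ltW mu_gt0)).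
Qed.

Lemma wnormm_residm a : wnormm (residm a) = 1 - 2 * mu.
Proof.
rewrite /wnormm /residm big_map big_enum /=.
under eq_bigr do rewrite ger0_norm ?residm_weight_ge0 //.
rewrite sumrB U_row1 -mulr_sumr big_split /=.
have one x : \sum_(e < q) ((e == x)%:R : R) = 1.
  by rewrite -[RHS](sum_delta (fun=> 1) x); apply: eq_bigr => e _; rewrite mul1r.
by rewrite !one; ring.
Qed.

Lemma tvm_pairn_row j P a :
  tvm (pairn c d j (convm P (row_meas U a))) <=
  mu * tvm (pairn c d j.+1 P) + (1 - 2 * mu) * tvm (pairn c d j P).
Proof.
rewrite (tvm_eqm (pairn_convm c d j P (row_meas U a))); set Y := pairn c d j P.
have split : eqm (convm Y (row_meas U a))
    (scalem mu (convm Y (pairm R c d)) ++ convm (residm a) Y).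
  apply: eqm_trans (eqm_convm (eqm_refl Y) (row_meas_split a)) _.
  apply: eqm_trans (convm_catr _ _ _) _; apply: eqm_cat; last exact: convmC.
  apply: eqm_trans (convmC _ _) _; apply: eqm_trans (convm_scalel _ _ _) _.
  exact/eqm_scale/convmC.
rewrite (tvm_eqm split); apply: le_trans (tvm_cat _ _) _.
rewrite tvm_scale ger0_norm ?(ltW mu_gt0) // lerD2l -(wnormm_residm a).
exact: tvm_convm.
Qed.

Lemma out_meas0 (z : {ffun 'I_0 -> 'I_q}) : eqm (out_meas U z) [:: (1, [ffun=> 0%N])].
Proof.
move=> s; rewrite massm_out_meas /Wx /massm big_cons big_nil mulr1 addr0.
have comp0 (y : {ffun 'I_0 -> 'I_q}) : Defs.comp y = [ffun=> 0%N].
  by apply/ffunP => e; rewrite !ffunE -sum1dep_card big_ord0.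
under eq_bigr do rewrite big_ord0.
have [<-|ne] := eqVneq [ffun=> 0%N] s.
  under eq_bigl do rewrite comp0 eqxx.
  by rewrite sumr_const card_ffun !card_ord expn0.
by rewrite big_pred0 // => y; rewrite comp0 (negbTE ne).
Qed.

Lemma convm_out_meas0 P (z : {ffun 'I_0 -> 'I_q}) : eqm (convm P (out_meas U z)) P.
Proof.
apply: eqm_trans (eqm_convm (eqm_refl P) (out_meas0 z)) _ => k.
rewrite !massm_integm integm_convm; apply: eq_integm => x.
rewrite /integm big_cons big_nil mul1r addr0 /=.
by have -> : addcomp x [ffun=> 0%N] = x by apply/ffunP => i; rewrite !ffunE addn0.
Qed.

(* Expanding each of the m row measures of [out_meas U z] into its mu (delta_c + delta_d)
   part and its remainder gives a binomial mixture over the number j of pair factors. *)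
Lemma tvm_convm_out_meas m (z : {ffun 'I_m -> 'I_q}) P :
  tvm (convm P (out_meas U z)) <=
  \sum_(j < m.+1) 'C(m, j)%:R * mu ^+ j * (1 - 2 * mu) ^+ (m - j) * tvm (pairn c d j P).
Proof.
elim: m z P => [|m IH] z P.
  by rewrite big_ord1 /= bin0 expr0 !mul1r (tvm_eqm (convm_out_meas0 P z)).
have e : eqm (convm P (out_meas U z))
             (convm (convm P (row_meas U (z ord0))) (out_meas U (fftail z))).
  apply: eqm_trans (eqm_convm (eqm_refl P) (out_meas_cons U z)) _.
  exact: eqm_sym (convmA _ _ _).
rewrite (tvm_eqm e) -(sum_binomial_recursion m mu _ (fun j => tvm (pairn c d j P))).
apply: le_trans (IH _ _) _.
apply: ler_sum => j _; apply: ler_wpM2l; last exact: tvm_pairn_row.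
by rewrite !mulr_ge0 ?exprn_ge0 ?subr_ge0 // ltW.
Qed.

End Smoothing.

Section Dipole.
Variables (R : numDomainType) (q : nat) (c d : 'I_q).
Hypothesis cd : c != d.
Local Notation K := {ffun 'I_q -> nat}.

Definition cdcomp (u v : nat) : K :=
  [ffun i => if i == c then u else if i == d then v else 0%N].

(* C(j, u - 1) - C(j, u), written without truncated subtraction. *)
Definition pascal_diff j u : R := 'C(j.+1, u)%:R - 2 * 'C(j, u)%:R.

Definition dipole_pairn j : fmeas R q :=
  [seq (pascal_diff j u, cdcomp u (j.+1 - u)) | u <- index_iota 0 j.+2].

Let dc_neq : (d == c) = false. Proof. by rewrite eq_sym (negbTE cd). Qed.

Lemma cdcomp_addc u v : addcomp (cdcomp u v) (evec c) = cdcomp u.+1 v.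
Proof. by apply/ffunP => i; rewrite !ffunE; case: (i == c); rewrite ?addn1 ?addn0. Qed.

Lemma cdcomp_addd u v : addcomp (cdcomp u v) (evec d) = cdcomp u v.+1.
Proof.
apply/ffunP => i; rewrite !ffunE; case: (i =P c) => [->|_]; first by rewrite (negbTE cd) addn0.
by case: (i == d); rewrite ?addn1 ?addn0.
Qed.

Lemma cdcomp_inj u v u' v' : (cdcomp u v == cdcomp u' v') = (u == u') && (v == v').
Proof.
apply/eqP/andP => [/ffunP e|[/eqP-> /eqP->]] //.
by have := e c; have := e d; rewrite !ffunE eqxx dc_neq eqxx => -> ->.
Qed.

Lemma evec_cdcomp : evec c = cdcomp 1 0 /\ evec d = cdcomp 0 1.
Proof.
split; apply/ffunP => i; rewrite !ffunE; first by case: (i == c); case: (i == d).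
by case: (i =P c) => [->|_]; rewrite ?(negbTE cd) //; case: (i == d).
Qed.

Lemma dipole_pairn_succ j : eqm (convm (dipole_pairn j) (pairm R c d)) (dipole_pairn j.+1).
Proof.
move=> k; rewrite !massm_integm integm_convm.
set F := fun u => ((cdcomp u (j.+2 - u) == k)%:R : R).
have -> : integm (dipole_pairn j) (fun x => integm (pairm R c d) (fun y => (addcomp x y == k)%:R))
    = \sum_(0 <= u < j.+2) (pascal_diff j u * F u.+1 + pascal_diff j u * F u).
  rewrite /integm /dipole_pairn big_map; apply: eq_big_nat => u /andP[_ hu].
  rewrite !big_cons big_nil !mul1r addr0 cdcomp_addc cdcomp_addd mulrDr /F.
  by rewrite subSS -subSn.
have -> : integm (dipole_pairn j.+1) (fun x => (x == k)%:R)
    = \sum_(0 <= u < j.+3) pascal_diff j.+1 u * F u.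
  by rewrite /integm /dipole_pairn big_map.
have pascal u : pascal_diff j.+1 u.+1 = pascal_diff j u + pascal_diff j u.+1.
  by rewrite /pascal_diff !binS !natrD; ring.
rewrite big_split /= [RHS]big_nat_recl //.
under [in RHS]eq_bigr do rewrite pascal mulrDl.
rewrite big_split /= addrCA; congr (_ + _).
rewrite big_nat_recl // [in RHS]big_nat_recr //=.
have -> : pascal_diff j j.+2 = 0 by rewrite /pascal_diff !bin_small // mulr0 subr0.
by rewrite /pascal_diff !bin0 mul0r addr0.
Qed.

Lemma pairn_dipole j : eqm (pairn c d j (dipole R c d)) (dipole_pairn j).
Proof.
elim: j => [|j IH]; last exact: eqm_trans (eqm_convm IH (eqm_refl _)) (dipole_pairn_succ j).
move=> k; have [ec ed] := evec_cdcomp.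
rewrite /massm /dipole /dipole_pairn /pascal_diff /= ec ed !big_cons big_nil.
by rewrite subn0 subnn !bin0 binn bin_small //=; ring.
Qed.

(* The weights C(j, u - 1) - C(j, u) telescope on either side of the mode of C(j, .). *)
Lemma tvm_dipole_pairn j : tvm (dipole_pairn j) = 2 * 'C(j, j./2)%:R.
Proof.
rewrite tvm_uniq; last first.
  rewrite /dipole_pairn -map_comp map_inj_in_uniq ?iota_uniq // => u v _ _ /= /eqP.
  by rewrite cdcomp_inj => /andP[/eqP].
rewrite /dipole_pairn big_map big_nat_recl //=.
have -> : pascal_diff j 0 = -1 by rewrite /pascal_diff !bin0; ring.
have absE v : `|pascal_diff j v.+1| = `|('C(j, v.+1)%:R : R) - 'C(j, v)%:R|.
  by rewrite /pascal_diff binS natrD distrC; congr `|_|; ring.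
under eq_bigr do rewrite absE.
have hj : (j./2 <= j.+1)%N by rewrite -{2}(odd_double_half j); lia.
rewrite (@big_cat_nat _ _ _ j./2) //=.
rewrite (@telescope_sumr_eq _ 0 j./2 (fun v => 'C(j, v)%:R)) //; last first.
  by move=> v /andP[_ hv]; rewrite ger0_norm // subr_ge0 ler_nat leq_bin_succ_lt_half.
rewrite (@telescope_sumr_eq _ j./2 j.+1 (fun v => - ('C(j, v)%:R : R))) //; last first.
  move=> v /andP[hv _]; rewrite ler0_norm ?subr_le0 ?ler_nat ?geq_bin_succ_ge_half //.
  ring.
by rewrite bin0 (bin_small (ltnSn j)) normrN1; ring.
Qed.

End Dipole.

Section CompositionDistance.
Variable q : nat.
Local Open Scope nat_scope.
Local Notation K := {ffun 'I_q -> nat}.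
Implicit Types t : K.

Definition distc t1 t2 : nat := \sum_(i < q) (t1 i - t2 i).

Lemma distc_sym n t1 t2 : inN n t1 -> inN n t2 -> distc t1 t2 = distc t2 t1.
Proof.
rewrite /inN /distc => /eqP s1 /eqP s2.
have split t t' : \sum_(i < q) t i = distc t t' + \sum_(i < q) minn (t i) (t' i).
  by rewrite -big_split; apply: eq_bigr => i _ /=; lia.
have := split t2 t1; rewrite (eq_bigr _ (fun i _ => minnC (t2 i) (t1 i))) => e2.
by apply/eqP; rewrite -(eqn_add2r (\sum_(i < q) minn (t1 i) (t2 i))) -split -e2 s1 s2.
Qed.

Lemma distc_eq0 n t1 t2 : inN n t1 -> inN n t2 -> distc t1 t2 = 0 -> t1 = t2.
Proof.
move=> t1n t2n d12; have d21 : distc t2 t1 = 0 by rewrite -(distc_sym t1n t2n).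
apply/ffunP => i.
have le_distc t t' : t i - t' i <= distc t t' by rewrite /distc (bigD1 i) //= leq_addr.
by apply/eqP; rewrite eqn_leq -!subn_eq0 -!leqn0 -{1}d12 -d21 !le_distc.
Qed.

Lemma adjacent_comps n t1 t2 (a b : 'I_q) :
  inN n.+1 t1 -> a != b -> addcomp t1 (evec a) = addcomp t2 (evec b) ->
  exists t, [/\ inN n t, t1 = addcomp (evec b) t & t2 = addcomp (evec a) t].
Proof.
move=> t1n ab e; have ba : (b == a) = false by rewrite eq_sym (negbTE ab).
have tb : 0 < t1 b.
  by move/ffunP: e => /(_ b); rewrite !ffunE eqxx ba addn0 addn1 => ->.
exists [ffun i => t1 i - (i == b)]; split.
- have hs : \sum_(i < q) t1 i = 1 + \sum_(i < q) (t1 i - (i == b)).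
    rewrite (bigD1 b) //= [in RHS](bigD1 b) //= eqxx addnA add1n subn1 prednK //.
    by congr (_ + _); apply: eq_bigr => i /negbTE ->; rewrite subn0.
  by rewrite /inN; under eq_bigr do rewrite ffunE; move: t1n; rewrite /inN hs add1n eqSS.
- apply/ffunP => i; rewrite !ffunE; case: (i =P b) => [->|_]; last by rewrite subn0.
  by rewrite add1n subn1 prednK.
- apply/ffunP => i; move/ffunP: e => /(_ i); rewrite !ffunE.
  by case: (i =P b) => [->|/eqP/negbTE ib]; rewrite ?ba ?ib /=; lia.
Qed.

(* Move one symbol from a coordinate where t1 exceeds t2 to one where it falls short. *)
Lemma distc_step n k t1 t2 : inN n t1 -> inN n t2 -> distc t1 t2 = k.+1 ->
  exists t a b, [/\ inN n t, distc t t2 = k, a != b & addcomp t1 (evec a) = addcomp t (evec b)].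
Proof.
move=> t1n t2n d12.
have [a ha] : exists a, t2 a < t1 a.
  apply/existsP; apply: contraT; rewrite negb_exists => /forallP lt.
  by move: d12; rewrite /distc big1 // => i _; have := lt i; rewrite -leqNgt; lia.
have [b hb] : exists b, t1 b < t2 b.
  apply/existsP; apply: contraT; rewrite negb_exists => /forallP lt.
  move: d12; rewrite (distc_sym t1n t2n) /distc big1 // => i _.
  by have := lt i; rewrite -leqNgt; lia.
have ab : (a == b) = false by apply/negbTE/eqP => eab; move: ha hb; rewrite eab; lia.
have sum1 c : \sum_(i < q) (i == c) = 1.
  by rewrite (bigD1 c) //= eqxx big1 // => i /negbTE ->.
have pt i : t1 i - (i == a) + (i == a) = t1 i
         /\ t1 i - (i == a) + (i == b) - t2 i + (i == a) = t1 i - t2 i.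
  case: (i =P a) => [->|_]; first by rewrite ab /=; lia.
  by case: (i =P b) => [->|_] /=; lia.
exists [ffun i => t1 i - (i == a) + (i == b)], b, a; split.
- rewrite /inN -(eqP t1n); under eq_bigr do rewrite ffunE.
  rewrite big_split /= sum1 -(sum1 a) -big_split /=.
  by apply/eqP/eq_bigr => i _; case: (pt i).
- apply/eqP; rewrite -eqSS -d12 /distc -addn1 -(sum1 a) -big_split /=.
  by apply/eqP/eq_bigr => i _; rewrite ffunE; case: (pt i).
- by rewrite eq_sym ab.
- by apply/ffunP => i; rewrite !ffunE addnAC; case: (pt i) => ->.
Qed.

End CompositionDistance.

Section AdjacentInputs.
Variables (R : realType) (q : nat) (U : 'M[R]_q) (mu : R).
Hypothesis mu_gt0 : 0 < mu.
Hypothesis mu_le : 2 * mu <= 1.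
Hypothesis mu_leU : forall a e, mu <= U a e.
Hypothesis U_row1 : forall a, \sum_(e < q) U a e = 1.

Local Notation K := {ffun 'I_q -> nat}.

Lemma tvm_dipole_out_meas c d m (z : {ffun 'I_m -> 'I_q}) : c != d ->
  tvm (convm (dipole R c d) (out_meas U z)) <= 2 / Num.sqrt (m.+1%:R * (2 * mu)).
Proof.
move=> cd; apply: le_trans (tvm_convm_out_meas cd mu_gt0 mu_le mu_leU U_row1 z _) _.
under eq_bigr do rewrite (tvm_eqm (pairn_dipole R cd _)) (tvm_dipole_pairn R cd).
exact: binomial_mixture_central_binom.
Qed.

(* As the rows of U sum to 1,
   row_meas U b - row_meas U a = sum_e (U b e - U a e) (delta_e - delta_a). *)
Definition row_diff_meas (a b : 'I_q) : fmeas R q :=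
  flatten [seq scalem (U b e - U a e) (dipole R e a) | e <- enum 'I_q].

Lemma row_diff_meas_eqm a b :
  eqm (row_diff_meas a b) (row_meas U b ++ scalem (-1) (row_meas U a)).
Proof.
move=> k; rewrite massm_cat massm_scale massm_flatten big_map big_enum /=.
have row x : massm (row_meas U x) k = \sum_(e < q) (evec e == k)%:R * U x e.
  by rewrite /massm /row_meas big_map big_enum.
have dip e : massm (scalem (U b e - U a e) (dipole R e a)) k
    = (U b e - U a e) * ((evec e == k)%:R - (evec a == k)%:R).
  by rewrite massm_scale /massm /dipole !big_cons big_nil /=; ring.
under eq_bigr do rewrite dip mulrBr.
rewrite !row sumrB -mulr_suml sumrB !U_row1 subrr mul0r subr0 mulN1r -sumrB.
by apply: eq_bigr => e _; ring.
Qed.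

Lemma tvm_row_diff_out_meas a b m (z : {ffun 'I_m -> 'I_q}) :
  tvm (convm (row_diff_meas a b) (out_meas U z)) <= 2 * (2 / Num.sqrt (m.+1%:R * (2 * mu))).
Proof.
set bd := 2 / _; have bd0 : 0 <= bd by rewrite divr_ge0 ?sqrtr_ge0.
apply: le_trans (tvm_convm_flatten _ _ _ _) _.
apply: le_trans (_ : \sum_(e <- enum 'I_q) `|U b e - U a e| * bd <= _).
  apply: ler_sum => e _; rewrite ler_wpM2l //.
  have [->|ea] := eqVneq e a; first by rewrite tvm_convm_dipole_same.
  exact: tvm_dipole_out_meas.
rewrite -mulr_suml ler_wpM2r // big_enum /=.
apply: le_trans (_ : \sum_(e < q) (U b e + U a e) <= _); last by rewrite big_split /= !U_row1.
apply: ler_sum => e _; apply: le_trans (ler_normB _ _) _.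
by rewrite !ger0_norm // (le_trans (ltW mu_gt0)).
Qed.

Lemma dTV_adjacent n (t1 t2 : K) a b : (0 < n)%N -> inN n t1 -> inN n t2 -> a != b ->
  addcomp t1 (evec a) = addcomp t2 (evec b) ->
  dTV n U t1 t2 <= 2 / Num.sqrt (n%:R * (2 * mu)).
Proof.
case: n => // m _ t1n t2n ab e.
have [x1 [cx1 W1]] := W_comp U t1n; have [x2 [cx2 W2]] := W_comp U t2n.
have [t [tm t1E t2E]] := adjacent_comps t1n ab e; have [z cz] := comp_surj tm.
have peel c (x : {ffun 'I_m.+1 -> 'I_q}) : Defs.comp x = addcomp (evec c) (Defs.comp z) ->
    eqm (out_meas U x) (convm (row_meas U c) (out_meas U z)).
  move=> cx; have cxz : Defs.comp x = Defs.comp (ffcons c z) by rewrite comp_ffcons.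
  apply: eqm_trans (out_meas_comp U cxz) (eqm_trans (out_meas_cons U _) _).
  by rewrite ffcons0 fftail_cons; apply: eqm_refl.
have E : eqm (out_meas U x1 ++ scalem (-1) (out_meas U x2))
             (convm (row_diff_meas a b) (out_meas U z)).
  apply: eqm_trans _ (eqm_convm (eqm_sym (row_diff_meas_eqm a b)) (eqm_refl _)).
  rewrite convm_catl; apply: eqm_cat; first by apply: peel; rewrite cx1 t1E cz.
  apply: eqm_trans _ (eqm_sym (convm_scalel _ _ _)); apply/eqm_scale/peel.
  by rewrite cx2 t2E cz.
rewrite (dTV_tvm W1 W2) ler_pdivrMl // (tvm_eqm E).
exact: tvm_row_diff_out_meas.
Qed.

End AdjacentInputs.

Lemma exists_uniform_lower_bound (R : realFieldType) q (U : 'M[R]_q) :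
  (forall a b, 0 < U a b) -> exists mu : R, [/\ 0 < mu, 2 * mu <= 1 & forall a e, mu <= U a e].
Proof.
move=> Upos; exists (\big[Order.min/2^-1]_(p : 'I_q * 'I_q) U p.1 p.2); split.
- by apply: lt_bigmin => [|p _]; rewrite ?invr_gt0.
- by rewrite -ler_pdivlMl // mulr1 bigmin_le_id.
- by move=> a e; apply: (bigmin_le _ (a, e)).
Qed.

Lemma norm_natr_sub (R : numDomainType) (x y : nat) :
  `|x%:R - y%:R : R| = (x - y)%:R + (y - x)%:R.
Proof.
have [yx|/ltnW xy] := leqP y x.
  by rewrite (eqnP yx) addr0 natrB // ger0_norm // subr_ge0 ler_nat.
by rewrite (eqnP xy) add0r natrB // distrC ger0_norm // subr_ge0 ler_nat.
Qed.

Lemma dc_distc (R : realType) q n (t1 t2 : {ffun 'I_q -> nat}) :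
  inN n t1 -> inN n t2 -> dc R t1 t2 = (distc t1 t2)%:R.
Proof.
move=> t1n t2n; rewrite /dc; under eq_bigr do rewrite norm_natr_sub.
rewrite big_split /= -!natr_sum -/(distc t1 t2) -/(distc t2 t1) (distc_sym t2n t1n).
lra.
Qed.

Section TotalVariationPath.
Variables (R : realType) (q : nat) (U : 'M[R]_q) (n : nat).
Local Notation K := {ffun 'I_q -> nat}.

Lemma dTV_triangle (t1 t2 t3 : K) : dTV n U t1 t2 <= dTV n U t1 t3 + dTV n U t3 t2.
Proof.
rewrite /dTV -mulrDr ler_wpM2l // -big_split /=; apply: ler_sum => s _.
by rewrite -(subrKA (W n U t3 s)) ler_normD.
Qed.

Lemma dTV_refl (t : K) : dTV n U t t = 0.
Proof. by rewrite /dTV big1 ?mulr0 // => s _; rewrite subrr normr0. Qed.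

Lemma dTV_le_distc (B : R) : 0 <= B ->
  (forall (t1 t2 : K) a b, inN n t1 -> inN n t2 -> a != b ->
     addcomp t1 (evec a) = addcomp t2 (evec b) -> dTV n U t1 t2 <= B) ->
  forall t1 t2 : K, inN n t1 -> inN n t2 -> dTV n U t1 t2 <= B * (distc t1 t2)%:R.
Proof.
move=> B0 adj t1 t2 t1n t2n; move dk : (distc t1 t2) => k.
elim: k t1 t1n dk => [|k IH] t1 t1n d12.
  by rewrite (distc_eq0 t1n t2n d12) dTV_refl mulr0n mulr0.
have [t [a [b [tn dt ab e]]]] := distc_step t1n t2n d12.
apply: le_trans (dTV_triangle t1 t2 t) _.
by rewrite -natr1 mulrDr mulr1 addrC lerD ?(adj _ _ a b) ?IH.
Qed.

End TotalVariationPath.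

Lemma inv_sqrt_le_bnd (R : realType) q n (C : R) : (2 <= q)%N -> (2 <= n)%N -> 0 <= C ->
  C / Num.sqrt n%:R <= bnd q n C.
Proof.
move=> q2 n2 C0; rewrite /bnd mulrAC -[leLHS]mulr1.
apply: ler_wpM2l; first by rewrite mulr_ge0 ?invr_ge0 ?sqrtr_ge0.
have ln2 : (0 : R) < ln 2 by rewrite ln_gt0 // ltr1n.
have log1 : 1 <= log2 (n%:R : R).
  by rewrite /log2 ler_pdivlMr // mul1r ler_ln ?posrE ?ltr0n ?ler_nat // (leq_trans _ n2).
rewrite -[leLHS](powRr0 (log2 (n%:R : R))); apply: (ler_powR log1).
by rewrite divr_ge0 // subr_ge0 (ler_nat R 2 q).
Qed.

Theorem lemma11 (R : realType) (q : nat) (U : 'M[R]_q) :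
  (2 <= q)%N -> pos_stochastic U ->
  exists C : R, exists N : nat, forall n : nat, (N <= n)%N ->
    (forall (t1 t2 : {ffun 'I_q -> nat}) (a b : 'I_q),
        inN n t1 -> inN n t2 -> a != b ->
        addcomp t1 (evec a) = addcomp t2 (evec b) ->
        dTV n U t1 t2 <= bnd q n C)
    /\
    (forall (t1 t2 : {ffun 'I_q -> nat}),
        inN n t1 -> inN n t2 ->
        dTV n U t1 t2 <= bnd q n C * dc R t1 t2).
Proof.
move=> q2 [Upos U_row1]; have [mu [mu_gt0 mu_le mu_leU]] := exists_uniform_lower_bound Upos.
set C := 2 / Num.sqrt (2 * mu); have C0 : 0 <= C by rewrite divr_ge0 ?sqrtr_ge0.
exists C, 2%N => n n2; have n0 : (0 < n)%N by apply: leq_trans n2.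
have sqrt_le_bnd : 2 / Num.sqrt (n%:R * (2 * mu)) <= bnd q n C.
  rewrite sqrtrM ?ler0n // invfM mulrCA mulrC -/C.
  exact: inv_sqrt_le_bnd.
have adjacent : forall (t1 t2 : {ffun 'I_q -> nat}) (a b : 'I_q),
    inN n t1 -> inN n t2 -> a != b ->
    addcomp t1 (evec a) = addcomp t2 (evec b) -> dTV n U t1 t2 <= bnd q n C.
  move=> t1 t2 a b t1n t2n ab e; apply: le_trans sqrt_le_bnd.
  exact: (dTV_adjacent mu_gt0 mu_le mu_leU U_row1 n0 t1n t2n ab e).
split=> // t1 t2 t1n t2n; rewrite (dc_distc R t1n t2n).
apply: dTV_le_distc => //; apply: le_trans sqrt_le_bnd.
by rewrite divr_ge0 ?sqrtr_ge0.
Qed.
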